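(* Let $G$ be a fermionic group with $(-1)^F\neq 1$, and let $d\ge1$. Then there is an exact sequence of topological groups \[ 1\to\operatorname{Spin}(d)\to H_d(G)\to G_b\to 1, \] where $G_b:=G/\langle(-1)^F\rangle$.
   Context: A fermionic group is a topological group $G$ together with a central element $(-1)^F$ with $((-1)^F)^2=1$ and a continuous homomorphism $\theta:G\to\mathbb{Z}_2$ with $\theta((-1)^F)=0$. The fermionic tensor product $A\otimes B$ of fermionic groups is the quotient $(A\times B)/\langle((-1)^F_A,(-1)^F_B)\rangle$, with product $(a_1\otimes b_1)(a_2\otimes b_2)=((-1)^F_A)^{\theta(a_2)\theta(b_1)}a_1a_2\otimes b_1b_2$ and grading $\theta(a\otimes b)=\theta(a)+\theta(b)$. The subscript $ev$ denotes the kernel of the grading. $\operatorname{Pin}^+(d)$ is the double cover of $O(d)$ in which lifts of reflections square to $+1$. It is graded by the determinant sign of its image in $O(d)$, so that its even part is $\operatorname{Spin}(d)$, and its fermion parity is $-1$. Finally, $H_d(G):=(\operatorname{Pin}^+(d)\otimes G)_{ev}$. *)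

From HB Require Import structures.
From mathcomp Require Import all_boot all_order all_algebra generic_quotient.
From mathcomp Require Import all_classical all_reals topology_structure
  product_topology function_spaces subtype_topology quotient_topology
  bool_topology num_topology.
From mathcomp Require Import Rstruct Rstruct_topology.

Set Implicit Arguments.
Unset Strict Implicit.
Unset Printing Implicit Defensive.

Import GRing.Theory.
Local Open Scope classical_set_scope.
Local Open Scope ring_scope.
Local Open Scope quotient_scope.

Record topGroup := TopGroup {
  tg_sort :> topologicalType;
  tg_mul : tg_sort -> tg_sort -> tg_sort;
  tg_one : tg_sort;
  tg_inv : tg_sort -> tg_sort;
  tg_mulA : associative tg_mul;
  tg_mul1g : left_id tg_one tg_mul;
  tg_mulVg : left_inverse tg_one tg_inv tg_mul;
  tg_mul_cont : continuous (fun p : tg_sort * tg_sort => tg_mul p.1 p.2);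
  tg_inv_cont : continuous tg_inv }.

(* A fermionic group: a topological group G with a central element
   fparity = (-1)^F of square 1 and a continuous homomorphism
   ftheta : G -> Z/2 (Z/2 = bool with xor, discrete topology) with
   ftheta fparity = 0. *)
Record fermionicGroup := FermionicGroup {
  fg_group :> topGroup;
  fparity : fg_group;
  ftheta : fg_group -> bool;
  fparity_central : forall g, tg_mul fparity g = tg_mul g fparity;
  fparity_sq : tg_mul fparity fparity = tg_one fg_group;
  ftheta_mul : forall x y, ftheta (tg_mul x y) = ftheta x (+) ftheta y;
  ftheta_cont : continuous ftheta;
  ftheta_parity : ftheta fparity = false }.

Notation RR := Rdefinitions.R.

(* An element of Cl(d) is its coordinate function on the basis
   e_A = e_{a_1} ... e_{a_k}  (A = {a_1 < ... < a_k}); Cl(d) = R^(2^d)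
   carries its (Euclidean = product) topology. *)
Definition Cl (d : nat) : topologicalType := {ptws {set 'I_d} -> RR}.

Section Clifford.
Variable d : nat.

Definition symd (A B : {set 'I_d}) : {set 'I_d} := (A :\: B) :|: (B :\: A).

(* e_A e_B = csign A B e_(A symdiff B), for the signature e_i^2 = +1 *)
Definition csign (A B : {set 'I_d}) : RR :=
  (-1) ^+ #|finset.finset (fun p : 'I_d * 'I_d =>
                          [&& p.1 \in A, p.2 \in B & (p.2 < p.1)%N])|.

Definition clmul (x y : Cl d) : Cl d :=
  fun C => \sum_(A : {set 'I_d}) csign A (symd A C) * x A * y (symd A C).

Definition clone : Cl d := fun A => if A == finset.set0 then 1 else 0.
Definition clm1 : Cl d := fun A => if A == finset.set0 then -1 else 0.

Definition clvec (v : 'I_d -> RR) : Cl d :=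
  fun A => \sum_(i : 'I_d | A == finset.set1 i) v i.

Definition unit_vector (v : 'I_d -> RR) : Prop := \sum_(i : 'I_d) v i ^+ 2 = 1.

(* Pin+(d): the subgroup of Cl(d)^x generated by -1 and the unit vectors
   (the latter are their own inverses, so this is the submonoid they
   generate). *)
Definition pin_set : set (Cl d) := fun x =>
  forall S : set (Cl d),
    S clone -> S clm1 -> (forall v, unit_vector v -> S (clvec v)) ->
    (forall a b, S a -> S b -> S (clmul a b)) -> S x.

Lemma pin_set_mul a b : pin_set a -> pin_set b -> pin_set (clmul a b).
Proof.
move=> pa pb S h1 hm1 hv hm.
exact: hm (pa S h1 hm1 hv hm) (pb S h1 hm1 hv hm).
Qed.

Lemma pin_set_one : pin_set clone.
Proof. by move=> S h1. Qed.

Lemma pin_set_m1 : pin_set clm1.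
Proof. by move=> S h1 hm1. Qed.

Definition Pin : topologicalType := set_type pin_set.

Definition pin_mul (a b : Pin) : Pin :=
  exist _ (clmul (val a) (val b))
    (mem_set (pin_set_mul (set_mem (valP a)) (set_mem (valP b)))).
Definition pin_one : Pin := exist _ clone (mem_set pin_set_one).
Definition pin_m1 : Pin := exist _ clm1 (mem_set pin_set_m1).

(* The Z/2-grading of Cl(d) (odd part); on Pin+(d) it is the determinant
   sign of the image in O(d): a product of k unit vectors has parity k. *)
Definition cl_odd (x : Cl d) : bool :=
  [exists A : {set 'I_d}, odd #|A| && (x A != 0)].
Definition pin_theta (a : Pin) : bool := cl_odd (val a).

Definition Spin : topologicalType := set_type [set a : Pin | ~~ pin_theta a].

End Clifford.

Section Fermionic.
Variables (G : fermionicGroup) (d : nat).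

Definition PG := (Pin d * tg_sort G)%type.

Definition fflip (x : PG) : PG :=
  (pin_mul (pin_m1 d) x.1, tg_mul (fparity G) x.2).

(* x ~ y iff x and y have the same coset modulo the subgroup
   < ((-1)^F, (-1)^F) > = {1, ((-1)^F,(-1)^F)} *)
Definition fcoset (x : PG) : set PG := [set x; fflip x].
Definition frel : rel PG := fun x y => `[< fcoset x = fcoset y >].

Lemma frel_refl : reflexive frel.
Proof. by move=> x; apply/asboolP. Qed.
Lemma frel_sym : symmetric frel.
Proof.
by move=> x y; apply: asbool_equiv_eq; split=> h; rewrite h.
Qed.
Lemma frel_trans : transitive frel.
Proof. by move=> y x z /asboolP h1 /asboolP h2; apply/asboolP; rewrite h1 h2. Qed.

Definition frel_equiv := EquivRel frel frel_refl frel_sym frel_trans.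

Definition Tens : topologicalType :=
  quotient_topology {eq_quot frel_equiv}.

Definition tens_pi (x : PG) : Tens := \pi_Tens x.

(* (a1 (x) g1)(a2 (x) g2) = ((-1)^F)^(theta a2 theta g1) a1 a2 (x) g1 g2 *)
Definition tens_twist (x y : PG) : PG :=
  (let s := pin_mul x.1 y.1 in
   if pin_theta y.1 && ftheta x.2 then pin_mul (pin_m1 d) s else s,
   tg_mul x.2 y.2).

Definition tens_mul (x y : Tens) : Tens :=
  tens_pi (tens_twist (repr x) (repr y)).

Definition tens_theta (x : Tens) : bool :=
  pin_theta (repr x).1 (+) ftheta (repr x).2.

Definition Hd : topologicalType := set_type [set x : Tens | ~~ tens_theta x].

Definition bcoset (g : tg_sort G) : set (tg_sort G) := [set g; tg_mul (fparity G) g].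
Definition brel : rel (tg_sort G) := fun x y => `[< bcoset x = bcoset y >].

Lemma brel_refl : reflexive brel.
Proof. by move=> x; apply/asboolP. Qed.
Lemma brel_sym : symmetric brel.
Proof. by move=> x y; apply: asbool_equiv_eq; split=> h; rewrite h. Qed.
Lemma brel_trans : transitive brel.
Proof. by move=> y x z /asboolP h1 /asboolP h2; apply/asboolP; rewrite h1 h2. Qed.

Definition brel_equiv := EquivRel brel brel_refl brel_sym brel_trans.

Definition Gb : topologicalType := quotient_topology {eq_quot brel_equiv}.

Definition gb_pi (g : tg_sort G) : Gb := \pi_Gb g.
Definition gb_mul (x y : Gb) : Gb := gb_pi (tg_mul (repr x) (repr y)).
Definition gb_one : Gb := gb_pi (tg_one G).

End Fermionic.

From HB Require Import structures.
From mathcomp Require Import all_boot all_order all_algebra generic_quotient.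
From mathcomp Require Import all_classical all_reals topology_structure
  product_topology function_spaces subtype_topology quotient_topology
  bool_topology num_topology.
From mathcomp Require Import Rstruct Rstruct_topology initial_topology.

(* The inclusion is a |-> [a (x) 1] and the projection is [a (x) g] |-> [g];
   both are well defined because the only identification in Pin+(d) (x) G is
   (a, g) ~ (-a, (-1)^F g).  A class [a (x) g] lies over the identity of G_b
   iff g = 1 or g = (-1)^F, and [a (x) (-1)^F] = [-a (x) 1], so the kernel
   consists of the [a (x) 1] with a even, i.e. a in Spin(d).  The inclusion is
   injective because (a, 1) ~ (b, 1) with a <> b would force (-1)^F = 1, and
   the projection is onto because for d >= 1 a unit vector is an odd element
   of Pin+(d), which can be used to make a (x) g even. *)

Set Implicit Arguments.
Unset Strict Implicit.
Unset Printing Implicit Defensive.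
Import GRing.Theory.
Local Open Scope classical_set_scope.
Local Open Scope ring_scope.
Local Open Scope quotient_scope.

Section TopGroupTheory.
Variable G : topGroup.
Local Notation "x * y" := (tg_mul x y).

Lemma tg_mulgV (x : G) : x * tg_inv x = tg_one G.
Proof.
have -> : x * tg_inv x = (tg_inv (tg_inv x) * tg_inv x) * (x * tg_inv x).
  by rewrite tg_mulVg tg_mul1g.
rewrite tg_mulA -(tg_mulA _ (tg_inv x) x) tg_mulVg -(tg_mulA _ (tg_one G)).
by rewrite tg_mul1g tg_mulVg.
Qed.

Lemma tg_mulg1 (x : G) : x * tg_one G = x.
Proof. by rewrite -(tg_mulVg x) tg_mulA tg_mulgV tg_mul1g. Qed.

End TopGroupTheory.

Section InvolutionQuotient.
Variables (T : choiceType) (f : T -> T) (e : equiv_rel T).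
Hypothesis fK : involutive f.
Hypothesis eE : forall x y, e x y = `[< [set x; f x] = [set y; f y] >].

Lemma orbit2_eq (x y : T) : [set x; f x] = [set y; f y] <-> y = x \/ y = f x.
Proof.
split=> [exy | [->|->]] //.
- by have : [set x; f x] y by rewrite exy; left.
- by rewrite fK setUC.
Qed.

Lemma eq_pi_orbit2 (x y : T) :
  \pi_{eq_quot e} x = \pi_{eq_quot e} y <-> y = x \/ y = f x.
Proof.
rewrite -orbit2_eq; split=> [/eqmodP | exy]; first by rewrite eE => /asboolP.
by apply/eqmodP; rewrite eE; apply/asboolP.
Qed.

Lemma pi_orbit2_f (x : T) : \pi_{eq_quot e} (f x) = \pi_{eq_quot e} x.
Proof. by apply/eq_pi_orbit2; right; rewrite fK. Qed.

Lemma repr_pi_orbit2 (x : T) :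
  repr (\pi_{eq_quot e} x) = x \/ repr (\pi_{eq_quot e} x) = f x.
Proof. by apply/eq_pi_orbit2; rewrite reprK. Qed.

End InvolutionQuotient.

Section PinParity.
Variable d : nat.

Lemma clmulN1 (x : Cl d) : clmul (@clm1 d) x = (fun C => - x C).
Proof.
apply/funext => C; rewrite /clmul (bigD1 finset.set0) //= big1 => [|A nzA].
  rewrite /clm1 eqxx addr0 /symd finset.set0D finset.setD0 finset.set0U.
  rewrite /csign (_ : finset.finset _ = finset.set0) ?cards0 ?mul1r ?mulN1r //.
  by apply/finset.setP => p; rewrite !finset.inE.
by rewrite /clm1 (negbTE nzA) mulr0 mul0r.
Qed.

Lemma clmulNl (x y : Cl d) : clmul (fun C => - x C) y = (fun C => - clmul x y C).
Proof.
by apply/funext => C; rewrite -sumrN; apply: eq_bigr => A _; rewrite mulrN mulNr.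
Qed.

Lemma clmulNr (x y : Cl d) : clmul x (fun C => - y C) = (fun C => - clmul x y C).
Proof. by apply/funext => C; rewrite -sumrN; apply: eq_bigr => A _; rewrite mulrN. Qed.

Lemma cl_oddN (x : Cl d) : cl_odd (fun C => - x C) = cl_odd x.
Proof. by apply: eq_existsb => A; rewrite oppr_eq0. Qed.

Local Notation m1 := (pin_mul (pin_m1 d)).

Lemma pin_m1K : involutive m1.
Proof.
by move=> a; apply: val_inj; rewrite /= !clmulN1; apply/funext => C; apply: opprK.
Qed.

Lemma pin_theta_m1 (a : Pin d) : pin_theta (m1 a) = pin_theta a.
Proof. by rewrite /pin_theta /= clmulN1 cl_oddN. Qed.

Lemma pin_mul_m1l (a b : Pin d) : pin_mul (m1 a) b = m1 (pin_mul a b).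
Proof. by apply: val_inj; rewrite /= !clmulN1 clmulNl. Qed.

Lemma pin_mul_m1r (a b : Pin d) : pin_mul a (m1 b) = m1 (pin_mul a b).
Proof. by apply: val_inj; rewrite /= !clmulN1 clmulNr. Qed.

Lemma pin_theta_one : pin_theta (pin_one d) = false.
Proof.
apply/existsP => -[A /andP[oddA]]; rewrite /= /clone.
by case: (A =P finset.set0) oddA => [-> | _ _]; rewrite ?finset.cards0 ?eqxx.
Qed.

Lemma pin_theta_surj : (1 <= d)%N -> forall t : bool, exists a : Pin d, pin_theta a = t.
Proof.
move=> d_gt0 [|]; last by exists (pin_one d); apply: pin_theta_one.
pose i0 : 'I_d := Ordinal d_gt0.
pose v i : RR := (i == i0)%:R.
have v_unit : unit_vector v.
  rewrite /unit_vector (bigD1 i0) //= big1 ?addr0 => [|i /negbTE ne].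
    by rewrite /v eqxx expr1n.
  by rewrite /v ne expr0n.
have v_pin : clvec v \in @pin_set d by apply: mem_set => S _ _ Sv _; apply: Sv.
exists (exist _ (clvec v) v_pin); apply/existsP; exists (finset.set1 i0).
rewrite finset.cards1 /= /clvec (bigD1 i0) ?eqxx //= big1 ?addr0 => [|i /andP[_ ne]].
  by rewrite /v eqxx oner_neq0.
by rewrite /v (negbTE ne).
Qed.

End PinParity.

Section TensorQuotient.
Variables (G : fermionicGroup) (d : nat).
Local Notation "x * y" := (tg_mul x y).
Local Notation par := (fparity G).

Lemma parK : involutive (tg_mul par).
Proof. by move=> g; rewrite tg_mulA fparity_sq tg_mul1g. Qed.

Lemma ftheta1 : ftheta (tg_one G) = false.
Proof. by have := ftheta_mul (tg_one G) (tg_one G); rewrite tg_mul1g addbb. Qed.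

Lemma ftheta_parl (g : G) : ftheta (par * g) = ftheta g.
Proof. by rewrite ftheta_mul ftheta_parity. Qed.

Lemma tg_mul_parC (g h : G) : g * (par * h) = par * (g * h).
Proof. by rewrite tg_mulA -fparity_central tg_mulA. Qed.

Lemma fflipK : involutive (@fflip G d).
Proof. by case=> a g; rewrite /fflip /= pin_m1K parK. Qed.

Lemma eq_tens_pi (x y : PG G d) : tens_pi x = tens_pi y <-> y = x \/ y = fflip x.
Proof. exact: (eq_pi_orbit2 (e := frel_equiv G d) fflipK). Qed.

Lemma tens_pi_flip (x : PG G d) : tens_pi (fflip x) = tens_pi x.
Proof. exact: (pi_orbit2_f (e := frel_equiv G d) fflipK). Qed.

Lemma repr_tens_pi (x : PG G d) : repr (tens_pi x) = x \/ repr (tens_pi x) = fflip x.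
Proof. exact: (repr_pi_orbit2 (e := frel_equiv G d) fflipK). Qed.

Lemma eq_gb_pi (g h : G) : gb_pi g = gb_pi h <-> h = g \/ h = par * g.
Proof. exact: (eq_pi_orbit2 (e := brel_equiv G) parK). Qed.

Lemma gb_pi_par (g : G) : gb_pi (par * g) = gb_pi g.
Proof. exact: (pi_orbit2_f (e := brel_equiv G) parK). Qed.

Lemma repr_gb_pi (g : G) : repr (gb_pi g) = g \/ repr (gb_pi g) = par * g.
Proof. exact: (repr_pi_orbit2 (e := brel_equiv G) parK). Qed.

Lemma tens_theta_pi (w : PG G d) :
  tens_theta (tens_pi w) = pin_theta w.1 (+) ftheta w.2.
Proof.
rewrite /tens_theta; case: (repr_tens_pi w) => -> //=.
by rewrite pin_theta_m1 ftheta_parl.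
Qed.

Lemma tens_twist_flipl (x y : PG G d) : tens_twist (fflip x) y = fflip (tens_twist x y).
Proof.
rewrite /tens_twist /fflip /= ftheta_parl pin_mul_m1l tg_mulA.
by case: ifP.
Qed.

Lemma tens_twist_flipr (x y : PG G d) : tens_twist x (fflip y) = fflip (tens_twist x y).
Proof.
rewrite /tens_twist /fflip /= pin_theta_m1 pin_mul_m1r tg_mul_parC.
by case: ifP.
Qed.

Lemma tens_mul_pi (x y : PG G d) :
  tens_mul (tens_pi x) (tens_pi y) = tens_pi (tens_twist x y).
Proof.
rewrite /tens_mul; case: (repr_tens_pi x) => ->; case: (repr_tens_pi y) => ->;
by rewrite ?tens_twist_flipl ?tens_twist_flipr ?tens_pi_flip.
Qed.

Lemma gb_mul_pi (g h : G) : gb_mul (gb_pi g) (gb_pi h) = gb_pi (g * h).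
Proof.
rewrite /gb_mul; case: (repr_gb_pi g) => ->; case: (repr_gb_pi h) => ->;
by rewrite ?tg_mul_parC -?tg_mulA ?gb_pi_par.
Qed.

End TensorQuotient.

Section ExactSequence.
Variables (G : fermionicGroup) (d : nat).
Local Notation par := (fparity G).
Local Notation one := (tg_one G).

Lemma even_tens_pi (a : Pin d) (g : G) :
  pin_theta a = ftheta g -> ~~ tens_theta (tens_pi (a, g)).
Proof. by rewrite tens_theta_pi /= => ->; rewrite addbb. Qed.

Lemma spin_incl_subproof (s : Spin d) : ~~ tens_theta (tens_pi (val s : Pin d, one)).
Proof. by apply: even_tens_pi; rewrite ftheta1; apply/negbTE/(set_mem (valP s)). Qed.

Definition spin_incl (s : Spin d) : Hd G d :=
  exist _ (tens_pi (val s : Pin d, one)) (mem_set (spin_incl_subproof s)).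

Definition hd_proj (h : Hd G d) : Gb G := gb_pi (repr (val h)).2.

Lemma hd_projE (h : Hd G d) (w : PG G d) :
  val h = tens_pi w -> hd_proj h = gb_pi w.2.
Proof.
by rewrite /hd_proj => ->; case: (repr_tens_pi w) => -> //=; rewrite gb_pi_par.
Qed.

Lemma spin_incl_continuous : continuous spin_incl.
Proof.
apply: (@continuous_comp_initial (Hd G d) (Spin d) (Tens G d) set_val) => s.
apply: (@continuous_comp _ _ _ (fun s : Spin d => (val s : Pin d, one))).
  apply: (@cvg_pair _ _ _ (nbhs s) (nbhs (val s : Pin d)) (nbhs one) _ _ _
    (fun s : Spin d => val s : Pin d)); last exact: cvg_cst.
  exact: (@initial_continuous _ _ (@set_val _ _)).
exact: pi_continuous.
Qed.

Lemma hd_proj_continuous : continuous hd_proj.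
Proof.
move=> h; apply: (continuous_comp (f := set_val)
  (g := fun t : Tens G d => gb_pi (repr t).2)).
  exact: initial_continuous.
apply: (repr_comp_continuous (g := fun x : PG G d => gb_pi x.2)).
  by move=> x; apply: continuous_comp; [exact: cvg_snd | exact: pi_continuous].
move=> x y /eqP /eq_tens_pi xy; apply/eqP.
by case: xy => -> //=; rewrite gb_pi_par.
Qed.

Lemma spin_incl_morph (s t u : Spin d) : val u = pin_mul (val s) (val t) ->
  val (spin_incl u) = tens_mul (val (spin_incl s)) (val (spin_incl t)).
Proof.
by move=> ust; rewrite /= tens_mul_pi /tens_twist /= ftheta1 andbF tg_mul1g -ust.
Qed.

Lemma hd_proj_morph (x y z : Hd G d) : val z = tens_mul (val x) (val y) ->
  hd_proj z = gb_mul (hd_proj x) (hd_proj y).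
Proof. by move/hd_projE ->; rewrite gb_mul_pi. Qed.

Lemma spin_incl_inj : par <> one -> injective spin_incl.
Proof.
move=> par_neq1 s t /(congr1 val) /eq_tens_pi [[/val_inj] // | [_ par1]].
by case: par_neq1; rewrite par1 tg_mulg1.
Qed.

Lemma hd_proj_surj : (1 <= d)%N -> forall b : Gb G, exists h : Hd G d, hd_proj h = b.
Proof.
move=> d_gt0 b; have [a ag] := pin_theta_surj d_gt0 (ftheta (repr b)).
exists (exist _ (tens_pi (a, repr b)) (mem_set (even_tens_pi ag))).
by rewrite (hd_projE (w := (a, repr b))) //; apply: reprK.
Qed.

Lemma ker_hd_proj (h : Hd G d) :
  hd_proj h = gb_one G <-> exists s : Spin d, spin_incl s = h.
Proof.
split=> [h1 | [s <-]]; last by rewrite (hd_projE (w := (val s : Pin d, one))).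
have [a hE] : exists a : Pin d, val h = tens_pi (a, one).
  case hw: (repr (val h)) h1 => [a g].
  rewrite /hd_proj hw /= => /esym /eq_gb_pi g1.
  have hE : val h = tens_pi (a, g) by rewrite -hw; apply/esym/reprK.
  case: g1 => [g1 | gpar]; first by exists a; rewrite hE g1.
  exists (pin_mul (pin_m1 d) a).
  by rewrite hE -tens_pi_flip /fflip /= gpar parK.
have a_even : a \in [set a : Pin d | ~~ pin_theta a].
  apply: mem_set; have /= := set_mem (valP h).
  by rewrite hE tens_theta_pi /= ftheta1 addbF.
by exists (exist _ a a_even); apply: val_inj; rewrite /= hE.
Qed.

End ExactSequence.

Theorem mainTheorem5 (G : fermionicGroup) (d : nat) :
  fparity G <> tg_one G -> (1 <= d)%N ->
  exists (i : Spin d -> Hd G d) (p : Hd G d -> Gb G),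
    [/\ continuous i, continuous p,
        (* i is a group homomorphism *)
        (forall s t u : Spin d, val u = pin_mul (val s) (val t) ->
            val (i u) = tens_mul (val (i s)) (val (i t))) &
        (* p is a group homomorphism *)
        (forall x y z : Hd G d, val z = tens_mul (val x) (val y) ->
            p z = gb_mul (p x) (p y))] /\
    [/\ (* exactness of 1 -> Spin(d) -> H_d(G) -> G_b -> 1 *)
        injective i,
        (forall b : Gb G, exists h : Hd G d, p h = b) &
        (forall h : Hd G d, p h = gb_one G <-> exists s : Spin d, i s = h)].
Proof.
move=> par_neq1 d_gt0; exists (@spin_incl G d), (@hd_proj G d); split; split.
- exact: spin_incl_continuous.
- exact: hd_proj_continuous.
- exact: spin_incl_morph.
- exact: hd_proj_morph.
- exact: spin_incl_inj.
- exact: hd_proj_surj.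
- exact: ker_hd_proj.
Qed.
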